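(* For the unit-sum normalization, there is an absolute constant $c>0$ such that for every $n\ge1$, random priority on $n$ agents and $n$ items satisfies $ar(RP)\ge c/\sqrt n$.
   Context: Agents $N=\{1,\dots,n\}$, items $M=\{1,\dots,n\}$, outcomes are bijections $\mu$ ($O$ the set of outcomes). Unit-sum valuation functions: injective $u_i:M\to\mathbb R_{\ge0}$ with $\sum_{j\in M}u_i(j)=1$; $V^n$ the set of profiles. Random priority (RP) picks a uniformly random ordering of the agents and in that order gives each agent its most preferred still-unassigned item. $ar(J)=\inf_{\mathbf u\in V^n}\mathbb E[\sum_i u_i(J(\mathbf u)_i)]/\max_{\mu\in O}\sum_i u_i(\mu_i)$. *)

From mathcomp Require Import all_boot.
From mathcomp Require Import perm.
From Stdlib Require Import Reals.
Set Implicit Arguments. Unset Strict Implicit. Unset Printing Implicit Defensive.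
Open Scope R_scope.

(* A valuation profile: u i j = value agent i : 'I_n assigns to item j : 'I_n. *)
Definition profile (n : nat) := 'I_n -> 'I_n -> R.

Definition unit_sum (n : nat) (u : profile n) : Prop :=
  forall i : 'I_n,
    injective (u i) /\ (forall j, 0 <= u i j) /\ \big[Rplus/0]_(j : 'I_n) u i j = 1.

Definition welfare (n : nat) (u : profile n) (mu : 'I_n -> 'I_n) : R :=
  \big[Rplus/0]_(i : 'I_n) u i (mu i).

(* Optimal welfare over all outcomes (bijections agents -> items).
   Welfares are nonnegative, so 0 is a neutral start for the max. *)
Definition opt_welfare (n : nat) (u : profile n) : R :=
  \big[Rmax/0]_(mu : {perm 'I_n}) welfare u mu.

(* Most preferred element (w.r.t. f) of x0 :: s (argmax; unique if f injective). *)
Definition best (n : nat) (f : 'I_n -> R) (x0 : 'I_n) (s : seq 'I_n) : 'I_n :=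
  foldl (fun b y => if Rlt_dec (f b) (f y) then y else b) x0 s.

Fixpoint sd_aux (n : nat) (u : profile n) (order avail : seq 'I_n)
  (assign : 'I_n -> 'I_n) : 'I_n -> 'I_n :=
  match order with
  | [::] => assign
  | i :: rest =>
      match avail with
      | [::] => assign
      | j0 :: avs =>
          let j := best (u i) j0 avs in
          sd_aux u rest (rem j avail) (fun k => if k == i then j else assign k)
      end
  end.

(* Outcome of serial dictatorship for the ordering sigma
   (sigma k = agent at position k). *)
Definition serial_dictatorship (n : nat) (u : profile n) (sigma : {perm 'I_n})
  : 'I_n -> 'I_n :=
  sd_aux u [seq sigma k | k <- enum 'I_n] (enum 'I_n) (fun k => k).

Definition RP_expected_welfare (n : nat) (u : profile n) : R :=
  (\big[Rplus/0]_(sigma : {perm 'I_n}) welfare u (serial_dictatorship u sigma))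
  / INR #|{perm 'I_n}|.

From HB Require Import structures.
From mathcomp Require Import all_boot.
From mathcomp Require Import perm.
From Stdlib Require Import Reals Lra ZArith.
Set Implicit Arguments. Unset Strict Implicit. Unset Printing Implicit Defensive.
Open Scope R_scope.

(* Let W be the optimal welfare and E the expected welfare of random priority.
   The agent at position t still finds one of her t+1 favourite items available,
   so she gets at least her (t+1)-th largest value; since she is a uniformly random
   agent, E >= (1/n) sum_i sum_k (k-th largest value of i) = 1.
   Now fix an optimal matching mu.  Before position t at most t of the items mu(i)
   are gone, so the agents at positions >= t whose mu-item is still free have total
   mu-value at least W - 2t.  Given the first t positions, the agent at position t
   is uniform among the n - t remaining ones, hence gets at least (W - 2t)/n in
   expectation.  Summing over t < W/4 gives n E >= W^2/8, and therefore
   E/W >= max (1/W, W/(8n)) >= 1/(8 sqrt n). *)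

Lemma Rplus_associative : associative Rplus.
Proof. by move=> x y z; rewrite Rplus_assoc. Qed.

HB.instance Definition _ :=
  Monoid.isComLaw.Build R 0 Rplus Rplus_associative Rplus_comm Rplus_0_l.

Section RealSums.
Variable I : finType.
Implicit Types (P : pred I) (F G : I -> R).

Lemma sumR_le P F G : (forall i, P i -> F i <= G i) ->
  \big[Rplus/0]_(i | P i) F i <= \big[Rplus/0]_(i | P i) G i.
Proof. by move=> FG; apply: big_ind2 => // *; lra. Qed.

Lemma sumR_ge0 P F : (forall i, P i -> 0 <= F i) -> 0 <= \big[Rplus/0]_(i | P i) F i.
Proof. by move=> F_ge0; apply: big_ind => // *; lra. Qed.

Lemma mulR_sumr P F c :
  c * \big[Rplus/0]_(i | P i) F i = \big[Rplus/0]_(i | P i) (c * F i).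
Proof. by apply: (big_rec2 (fun a b => c * a = b)) => [|i a b _ <-]; lra. Qed.

Lemma sumR_const P c : \big[Rplus/0]_(i | P i) c = INR #|P| * c.
Proof.
rewrite big_const_seq.
have ->: count P (index_enum I) = #|P|.
  by rewrite cardE /enum_mem size_filter /index_enum unlock.
elim: #|P| => [|k IH]; first by rewrite /=; lra.
by rewrite S_INR /= IH; lra.
Qed.

Lemma sumR_const_card c : \big[Rplus/0]_(i : I) c = INR #|I| * c.
Proof. exact: sumR_const. Qed.

Lemma sumR_le_card P F : (forall i, P i -> F i <= 1) ->
  \big[Rplus/0]_(i | P i) F i <= INR #|P|.
Proof. by move=> F_le1; rewrite -[INR _]Rmult_1_r -sumR_const; apply: sumR_le. Qed.

End RealSums.

Lemma card_predC_uniq (T : finType) (s : seq T) :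
  uniq s -> #|[predC s]| = (#|T| - size s)%nat.
Proof. by move=> s_uniq; rewrite -(cardC (mem s)) (card_uniqP s_uniq) addKn. Qed.

Lemma card_ord_lt (n t : nat) : (t <= n)%nat -> #|[pred b : 'I_n | (b < t)%nat]| = t.
Proof.
move=> t_le; rewrite -sum1_card (eq_bigl (fun b : 'I_n => (b < t)%nat)) //.
by rewrite -(@big_ord_widen nat 0%N addn t n (fun=> 1%N) t_le) sum1_card card_ord.
Qed.

Lemma has_mem_of_card (T : finType) (s1 s2 : seq T) :
  uniq s1 -> uniq s2 -> (#|T| < size s1 + size s2)%nat -> has (mem s2) s1.
Proof.
move=> s1_uniq s2_uniq s12_big; apply/negPn/negP => /hasPn disj.
have: (size s1 <= #|[predC s2]|)%nat.
  rewrite -(card_uniqP s1_uniq); apply/subset_leq_card/subsetP => x x_s1.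
  by rewrite !inE disj.
rewrite card_predC_uniq // leq_subRL; last by rewrite -(card_uniqP s2_uniq) max_card.
by rewrite addnC leqNgt s12_big.
Qed.

Section PermAverages.
Variable n : nat.

Lemma sumR_perm_tperm (F : {perm 'I_n} -> R) (a b : 'I_n) :
  \big[Rplus/0]_(s : {perm 'I_n}) F s = \big[Rplus/0]_(s : {perm 'I_n}) F (tperm a b * s)%g.
Proof. exact: (reindex_inj (mulgI (tperm a b))). Qed.

Lemma sumR_perm_eval (f : 'I_n -> R) (a : 'I_n) :
  INR n * \big[Rplus/0]_(s : {perm 'I_n}) f (s a) =
  INR #|{perm 'I_n}| * \big[Rplus/0]_(j : 'I_n) f j.
Proof.
have ->: INR n * \big[Rplus/0]_(s : {perm 'I_n}) f (s a) =
    \big[Rplus/0]_(b : 'I_n) \big[Rplus/0]_(s : {perm 'I_n}) f (s b).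
  have ->: INR n = INR #|'I_n| by rewrite card_ord.
  rewrite -sumR_const; apply: eq_bigr => b _.
  by rewrite (sumR_perm_tperm _ a b); apply: eq_bigr => s _; rewrite permM tpermL.
rewrite exchange_big /= -sumR_const; apply: eq_bigr => s _.
by rewrite [RHS](reindex_inj (@perm_inj _ s)).
Qed.

End PermAverages.

Section Best.
Variables (n : nat) (f : 'I_n -> R).

Lemma best_spec (s : seq 'I_n) (x0 : 'I_n) :
  best f x0 s \in x0 :: s /\ forall y, y \in x0 :: s -> f y <= f (best f x0 s).
Proof.
elim: s x0 => [|y s IH] x0.
  by rewrite /best /=; split=> [|z]; rewrite inE ?eqxx // => /eqP ->; lra.
rewrite /best /=; set x1 := (if _ then _ else _).
have [x1_mem x1_max] := IH x1; rewrite -/(best f x1 s).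
have [x1_x0y x0y_le_x1] : (x1 = x0 \/ x1 = y) /\ f x0 <= f x1 /\ f y <= f x1.
  by rewrite /x1; case: Rlt_dec => /= ?; split; (by left) || (by right) || lra.
split.
  move: x1_mem; rewrite !inE => /orP [/eqP ->|->]; last by rewrite !orbT.
  by case: x1_x0y => ->; rewrite eqxx ?orbT.
move=> z; rewrite !inE => /orP [/eqP ->|/orP [/eqP ->|z_s]];
  last by apply: x1_max; rewrite inE z_s orbT.
all: by apply: Rle_trans (x1_max _ (mem_head _ _)); lra.
Qed.

Lemma best_mem (x0 : 'I_n) (s : seq 'I_n) : best f x0 s \in x0 :: s.
Proof. by case: (best_spec s x0). Qed.

Lemma best_max (x0 : 'I_n) (s : seq 'I_n) y : y \in x0 :: s -> f y <= f (best f x0 s).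
Proof. by case: (best_spec s x0) => _; apply. Qed.

End Best.

Lemma mem_take_enum_ord (n t : nat) (k : 'I_n) : k \in take t (enum 'I_n) -> (k < t)%nat.
Proof.
move=> /(map_f val); rewrite map_take val_enum_ord take_iota mem_iota leq_min.
by case/andP=> _ /andP [].
Qed.

Lemma mem_drop_enum_ord (n t : nat) (k : 'I_n) : k \in drop t (enum 'I_n) -> (t <= k)%nat.
Proof.
by move=> /(map_f val); rewrite map_drop val_enum_ord drop_iota mem_iota => /andP [].
Qed.

Section SerialDictatorship.
Variables (n : nat) (u : profile n).
Local Notation sd_state := (seq 'I_n * ('I_n -> 'I_n))%type.

Definition sd_step (st : sd_state) (i : 'I_n) : sd_state :=
  if st.1 is j0 :: avs then
    let j := best (u i) j0 avs in (rem j st.1, fun k => if k == i then j else st.2 k)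
  else st.

Lemma sd_aux_foldl order avail assign :
  sd_aux u order avail assign = (foldl sd_step (avail, assign) order).2.
Proof.
have foldl_nil o a : foldl sd_step ([::], a) o = ([::], a) by elim: o.
elim: order avail assign => [|i o IH] [|j0 avs] assign //=.
by rewrite foldl_nil.
Qed.

Lemma foldl_sd_step_notin order (st : sd_state) k :
  k \notin order -> (foldl sd_step st order).2 k = st.2 k.
Proof.
elim: order st => [|i o IH] st //=; rewrite inE negb_or => /andP [ki ko].
by rewrite IH //= /sd_step; case: st.1 => //= j0 avs; rewrite (negbTE ki).
Qed.

Definition priority (s : {perm 'I_n}) := [seq s k | k <- enum 'I_n].

Definition state_at (s : {perm 'I_n}) (t : nat) : sd_state :=
  foldl sd_step (enum 'I_n, fun k => k) (take t (priority s)).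

Definition avail (s : {perm 'I_n}) (t : nat) := (state_at s t).1.

Definition pick (s : {perm 'I_n}) (t : 'I_n) :=
  best (u (s t)) (head t (avail s t)) (behead (avail s t)).

Lemma state_at_succ (s : {perm 'I_n}) (t : 'I_n) :
  state_at s t.+1 = sd_step (state_at s t) (s t).
Proof.
have t_lt : (t < size (priority s))%nat by rewrite size_map size_enum_ord.
rewrite /state_at (take_nth (s t) t_lt) foldl_rcons.
by rewrite (nth_map t) ?size_enum_ord // nth_ord_enum.
Qed.

Lemma avail_uniq_size (s : {perm 'I_n}) (t : nat) :
  (t <= n)%nat -> uniq (avail s t) /\ size (avail s t) = (n - t)%nat.
Proof.
elim: t => [|t IH] t_le.
  by rewrite /avail /state_at take0 /= enum_uniq size_enum_ord subn0.
have [av_uniq av_size] := IH (ltnW t_le).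
have t_lt : (t < n)%nat := t_le.
rewrite /avail (state_at_succ s (Ordinal t_le)) /sd_step -/(avail s t).
move: av_uniq av_size; case: (avail s t) => [|j0 avs] av_uniq av_size.
  by move: t_lt; rewrite -subn_gt0 -av_size.
by split; [exact: rem_uniq | rewrite size_rem ?best_mem // av_size subnS].
Qed.

Lemma pick_max (s : {perm 'I_n}) (t : 'I_n) y :
  y \in avail s t -> u (s t) y <= u (s t) (pick s t).
Proof. by rewrite /pick; case: (avail s t) => [|j0 avs] //; apply: best_max. Qed.

Lemma serial_dictatorship_at (s : {perm 'I_n}) (t : 'I_n) :
  serial_dictatorship u s (s t) = pick s t.
Proof.
rewrite /serial_dictatorship sd_aux_foldl -/(priority s).
rewrite -(cat_take_drop t.+1 (priority s)) foldl_cat -/(state_at s t.+1).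
rewrite foldl_sd_step_notin; last first.
  rewrite /priority -map_drop mem_map; last exact: perm_inj.
  by apply/negP => /mem_drop_enum_ord; rewrite ltnn.
have [_ av_size] := avail_uniq_size s (ltnW (ltn_ord t)).
rewrite state_at_succ /sd_step /pick -/(avail s t).
move: av_size; case: (avail s t) => [|j0 avs] /= av_size; last by rewrite eqxx.
by move/eqP: av_size; rewrite eq_sym subn_eq0 leqNgt ltn_ord.
Qed.

Lemma welfare_serial_dictatorship (s : {perm 'I_n}) :
  welfare u (serial_dictatorship u s) = \big[Rplus/0]_(t : 'I_n) u (s t) (pick s t).
Proof.
rewrite /welfare (reindex_inj (@perm_inj _ s)) /=.
by apply: eq_bigr => t _; rewrite serial_dictatorship_at.
Qed.

(* The items left before position t only depend on the first t agents. *)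
Lemma avail_tperm (s : {perm 'I_n}) (t : nat) (a b : 'I_n) :
  (t <= a)%nat -> (t <= b)%nat -> avail (tperm a b * s)%g t = avail s t.
Proof.
move=> t_le_a t_le_b; rewrite /avail /state_at /priority.
rewrite -(map_take t s) -(map_take t (tperm a b * s)%g).
congr (foldl _ _ _).1; apply/eq_in_map => k k_mem; have k_lt_t := mem_take_enum_ord k_mem.
by rewrite permM tpermD // neq_ltn (leq_trans k_lt_t) ?orbT.
Qed.

End SerialDictatorship.

Section UnitSum.
Variables (n : nat) (u : profile n).
Hypothesis u_unit_sum : unit_sum u.

Lemma unit_sum_ge0 i j : 0 <= u i j.
Proof. by case: (u_unit_sum i) => _ []. Qed.

Lemma unit_sum_le1 i j : u i j <= 1.
Proof.
case: (u_unit_sum i) => _ [_ <-]; rewrite (bigD1 j) //= -{1}[u i j]Rplus_0_r.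
by apply/Rplus_le_compat_l/sumR_ge0 => k _; apply: unit_sum_ge0.
Qed.

Lemma sum_welfare_sd_by_position :
  \big[Rplus/0]_(s : {perm 'I_n}) welfare u (serial_dictatorship u s) =
  \big[Rplus/0]_(t : 'I_n) \big[Rplus/0]_(s : {perm 'I_n}) u (s t) (pick u s t).
Proof.
under eq_bigr => s _ do rewrite welfare_serial_dictatorship.
exact: exchange_big.
Qed.

Definition pref_ge (i : 'I_n) : rel 'I_n :=
  fun a b => if Rle_dec (u i b) (u i a) then true else false.

Lemma pref_geP i a b : pref_ge i a b -> u i b <= u i a.
Proof. by rewrite /pref_ge; case: Rle_dec. Qed.

Lemma pref_ge_total i : total (pref_ge i).
Proof.
move=> a b; rewrite /pref_ge.
by case: Rle_dec => //= ?; case: Rle_dec => //= ?; lra.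
Qed.

Lemma pref_ge_trans i : transitive (pref_ge i).
Proof.
move=> b a c /pref_geP ab /pref_geP bc; rewrite /pref_ge.
by case: Rle_dec => //= ?; lra.
Qed.

Lemma pref_ge_refl i : reflexive (pref_ge i).
Proof. by move=> a; rewrite /pref_ge; case: Rle_dec => //= ?; lra. Qed.

Definition pref_order (i : 'I_n) := sort (pref_ge i) (enum 'I_n).

(* The (k+1)-th largest value of agent i. *)
Definition ranked_value (i k : 'I_n) := u i (nth i (pref_order i) k).

Lemma size_pref_order i : size (pref_order i) = n.
Proof. by rewrite size_sort size_enum_ord. Qed.

Lemma sum_ranked_value i : \big[Rplus/0]_(k : 'I_n) ranked_value i k = 1.
Proof.
case: (u_unit_sum i) => _ [_ <-].
have ->: \big[Rplus/0]_(j : 'I_n) u i j = \big[Rplus/0]_(j <- enum 'I_n) u i j.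
  by rewrite big_enum.
rewrite -(perm_big _ (permEl (perm_sort (pref_ge i) (enum 'I_n)))) -/(pref_order i).
by rewrite [RHS](big_nth i) size_pref_order big_mkord.
Qed.

Lemma ranked_value_le_pick (s : {perm 'I_n}) (t : 'I_n) :
  ranked_value (s t) t <= u (s t) (pick u s t).
Proof.
set i := s t.
have [av_uniq av_size] := avail_uniq_size u s (ltnW (ltn_ord t)).
have size_top : size (take t.+1 (pref_order i)) = t.+1.
  by rewrite size_takel // size_pref_order.
have : has (mem (avail u s t)) (take t.+1 (pref_order i)).
  apply: has_mem_of_card; rewrite ?take_uniq ?sort_uniq ?enum_uniq //.
  by rewrite card_ord size_top av_size addSn subnKC // ltnW.
case/hasP => x x_top x_av; apply: Rle_trans (pick_max x_av).
have x_pref : x \in pref_order i := mem_take x_top.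
rewrite /ranked_value -(nth_index i x_pref); apply: pref_geP.
apply: sorted_leq_nth; rewrite ?inE ?size_pref_order //.
- exact: pref_ge_trans.
- exact: pref_ge_refl.
- exact: sort_sorted (pref_ge_total i) _.
- by rewrite -[X in (_ < X)%nat](size_pref_order i) index_mem.
- by rewrite -ltnS -(in_take _ x_pref).
Qed.

Lemma sum_welfare_sd_ge_card : (0 < n)%nat ->
  INR #|{perm 'I_n}| <= \big[Rplus/0]_(s : {perm 'I_n}) welfare u (serial_dictatorship u s).
Proof.
move=> n_gt0; have n_pos : 0 < INR n by apply/lt_0_INR/ltP.
apply: (Rmult_le_reg_l (INR n)) => //.
rewrite sum_welfare_sd_by_position mulR_sumr.
have ->: INR n * INR #|{perm 'I_n}| =
    \big[Rplus/0]_(t : 'I_n) (INR #|{perm 'I_n}| * \big[Rplus/0]_(i : 'I_n) ranked_value i t).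
  rewrite -mulR_sumr exchange_big /=.
  rewrite (eq_bigr (fun _ => 1)) => [|i _]; last exact: sum_ranked_value.
  by rewrite sumR_const card_ord; lra.
apply: sumR_le => t _; rewrite -(sumR_perm_eval (ranked_value^~ t) t).
apply: Rmult_le_compat_l; first exact: pos_INR.
by apply: sumR_le => s _; apply: ranked_value_le_pick.
Qed.

Section OptimalMatchingBound.
Variable mu : {perm 'I_n}.
Local Notation W := (welfare u mu).

Definition kept_value (s : {perm 'I_n}) (t : 'I_n) (i : 'I_n) : R :=
  if mu i \in avail u s t then u i (mu i) else 0.

Lemma kept_value_ge0 s t i : 0 <= kept_value s t i.
Proof. by rewrite /kept_value; case: ifP => _; [apply: unit_sum_ge0 | lra]. Qed.

Lemma kept_value_le1 s t i : kept_value s t i <= 1.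
Proof. by rewrite /kept_value; case: ifP => _; [apply: unit_sum_le1 | lra]. Qed.

Lemma kept_value_le_pick s t : kept_value s t (s t) <= u (s t) (pick u s t).
Proof. by rewrite /kept_value; case: ifP => [/pick_max //|_]; apply: unit_sum_ge0. Qed.

Lemma sum_kept_value_tperm (t b : 'I_n) : (t <= b)%nat ->
  \big[Rplus/0]_(s : {perm 'I_n}) kept_value s t (s t) =
  \big[Rplus/0]_(s : {perm 'I_n}) kept_value s t (s b).
Proof.
move=> t_le_b; rewrite (sumR_perm_tperm _ t b); apply: eq_bigr => s _.
by rewrite /kept_value avail_tperm // permM tpermL.
Qed.

Lemma sum_kept_value_ge (s : {perm 'I_n}) (t : 'I_n) :
  W - INR t <= \big[Rplus/0]_(i : 'I_n) kept_value s t i.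
Proof.
set A := avail u s t.
have [A_uniq A_size] := avail_uniq_size u s (ltnW (ltn_ord t)).
have lost_le : \big[Rplus/0]_(i : 'I_n) (u i (mu i) - kept_value s t i) <= INR t.
  apply: Rle_trans (_ : \big[Rplus/0]_(i | mu i \notin A) 1 <= _).
    rewrite [X in _ <= X]big_mkcond; apply: sumR_le => i _; rewrite /kept_value -/A.
    by case: ifP => _ /=; [lra | have := unit_sum_le1 i (mu i); lra].
  rewrite sumR_const Rmult_1_r; apply: Req_le; congr INR.
  transitivity #|[predC A]|; last first.
    by rewrite card_predC_uniq // card_ord A_size subKn // ltnW.
  rewrite -(card_image (@perm_inj _ mu)); apply: eq_card => j.
  apply/imageP/idP => [[i i_out ->] //| j_out].
  by exists (mu^-1 j)%g; rewrite ?unfold_in /= permKV.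
have ->: W = \big[Rplus/0]_(i : 'I_n) kept_value s t i +
    \big[Rplus/0]_(i : 'I_n) (u i (mu i) - kept_value s t i).
  by rewrite /welfare -big_split; apply: eq_bigr => i _ /=; ring.
lra.
Qed.

Lemma sum_kept_value_late (s : {perm 'I_n}) (t : 'I_n) :
  W - 2 * INR t <= \big[Rplus/0]_(b : 'I_n | (t <= b)%nat) kept_value s t (s b).
Proof.
have := sum_kept_value_ge s t.
rewrite (reindex_inj (@perm_inj _ s)) (bigID (fun b : 'I_n => (t <= b)%nat)) /=.
set early := \big[_/_]_(b | ~~ _) _; set late := \big[_/_]_(b | _) _.
suff: early <= INR t by lra.
apply: Rle_trans (sumR_le_card _) _ => [b _|]; first exact: kept_value_le1.
apply: Req_le; congr INR; rewrite -[RHS](card_ord_lt (ltnW (ltn_ord t))).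
by apply: eq_card => b; rewrite !inE ltnNge.
Qed.

Lemma sum_pick_value_ge (t : 'I_n) :
  INR #|{perm 'I_n}| * (W - 2 * INR t) <=
  INR n * \big[Rplus/0]_(s : {perm 'I_n}) u (s t) (pick u s t).
Proof.
set late := [pred b : 'I_n | (t <= b)%nat].
apply: Rle_trans (_ : INR #|late| * \big[Rplus/0]_(s : {perm 'I_n}) kept_value s t (s t) <= _).
  rewrite -sumR_const -sumR_const.
  rewrite (eq_bigr _ (fun b (t_le_b : late b) => sum_kept_value_tperm t_le_b)) exchange_big /=.
  by apply: sumR_le => s _; apply: sum_kept_value_late.
apply: Rmult_le_compat.
- exact: pos_INR.
- by apply: sumR_ge0 => s _; apply: kept_value_ge0.
- by rewrite -[X in _ <= INR X]card_ord; apply/le_INR/leP/max_card.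
- by apply: sumR_le => s _; apply: kept_value_le_pick.
Qed.

Lemma sum_welfare_sd_ge_prefix (K : nat) : (K <= n)%nat -> 4 * (INR K - 1) <= W ->
  INR K * (INR #|{perm 'I_n}| * (W / 2)) <=
  INR n * \big[Rplus/0]_(s : {perm 'I_n}) welfare u (serial_dictatorship u s).
Proof.
move=> K_le_n K_le.
rewrite sum_welfare_sd_by_position mulR_sumr (bigID (fun t : 'I_n => (t < K)%nat)) /=.
set early := \big[_/_]_(t : 'I_n | (t < K)%nat) _; set late := \big[_/_]_(t | ~~ _) _.
have late_ge0 : 0 <= late.
  apply: sumR_ge0 => t _; apply: Rmult_le_pos; first exact: pos_INR.
  by apply: sumR_ge0 => s _; apply: unit_sum_ge0.
suff: INR K * (INR #|{perm 'I_n}| * (W / 2)) <= early by lra.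
rewrite /early -{1}(card_ord_lt K_le_n) -sumR_const; apply: sumR_le => t t_lt_K.
apply: Rle_trans (sum_pick_value_ge t); apply: Rmult_le_compat_l; first exact: pos_INR.
have: INR t + 1 <= INR K by rewrite -S_INR; apply/le_INR/leP.
lra.
Qed.

End OptimalMatchingBound.
End UnitSum.

Lemma bigRmax_ge (T : eqType) (F : T -> R) (r : seq T) x :
  x \in r -> F x <= \big[Rmax/0]_(y <- r) F y.
Proof.
elim: r => [|y r IH] //; rewrite big_cons inE => /orP [/eqP ->|/IH x_le].
  exact: Rmax_l.
exact: Rle_trans x_le (Rmax_r _ _).
Qed.

Lemma welfare_le_opt (n : nat) (u : profile n) (mu : {perm 'I_n}) :
  welfare u mu <= opt_welfare u.
Proof. exact: bigRmax_ge (mem_index_enum mu). Qed.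

Lemma opt_welfare_cases (n : nat) (u : profile n) :
  opt_welfare u = 0 \/ exists mu : {perm 'I_n}, opt_welfare u = welfare u mu.
Proof.
pose attained x := x = 0 \/ exists mu : {perm 'I_n}, x = welfare u mu.
apply: (big_ind attained) => [|x y|mu _]; first by left.
- exact: (@Rmax_case x y attained).
- by right; exists mu.
Qed.

Lemma exists_nat_ceil (r : R) : 0 <= r -> exists K : nat, r < INR K <= r + 1.
Proof.
move=> r_ge0; have [up_gt up_le] := archimed r.
have up_ge0 : (0 <= up r)%Z by apply/Z.lt_le_incl/lt_IZR; rewrite /=; lra.
by exists (Z.to_nat (up r)); rewrite INR_IZR_INZ Z2Nat.id //; lra.
Qed.

Lemma inv_sqrt_le_ratio (n W E : R) :
  0 < n -> 1 <= W -> 1 <= E -> W * W <= 8 * n * E -> 1 / 8 / sqrt n <= E / W.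
Proof.
move=> n_gt0 W_ge1 E_ge1 WW_le; set r := sqrt n.
have r_gt0 : 0 < r by apply: sqrt_lt_R0.
have rr : r * r = n by apply: sqrt_sqrt; lra.
have W_le : W <= 8 * r * E.
  case: (Rle_lt_dec W r) => W_r; first nra.
  apply: (Rmult_le_reg_r r) => //; nra.
apply: (Rmult_le_reg_r (r * W)); first nra.
have ->: 1 / 8 / r * (r * W) = W / 8 by field; lra.
have ->: E / W * (r * W) = r * E by field; lra.
lra.
Qed.

Section RandomPriority.
Variables (n : nat) (u : profile n).
Hypotheses (u_unit_sum : unit_sum u) (n_gt0 : (0 < n)%nat).
Local Notation perms := #|{perm 'I_n}|.

Lemma card_perm_gt0 : 0 < INR perms.
Proof. by apply/lt_0_INR/ltP/card_gt0P; exists 1%g. Qed.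

Lemma welfare_le_n (mu : 'I_n -> 'I_n) : welfare u mu <= INR n.
Proof.
apply: Rle_trans (sumR_le_card _) _ => [i _|]; first exact: unit_sum_le1.
by rewrite card_ord; apply: Rle_refl.
Qed.

Lemma welfare_ge0 (mu : 'I_n -> 'I_n) : 0 <= welfare u mu.
Proof. by apply: sumR_ge0 => i _; apply: unit_sum_ge0. Qed.

(* Each agent receives each item in the same number of bijections. *)
Lemma sum_welfare_perm : \big[Rplus/0]_(mu : {perm 'I_n}) welfare u mu = INR perms.
Proof.
have n_pos : 0 < INR n by apply/lt_0_INR/ltP.
apply: (Rmult_eq_reg_l (INR n)); last lra.
rewrite exchange_big mulR_sumr /=.
rewrite (eq_bigr (fun _ => INR perms)) => [|i _].
  by rewrite sumR_const card_ord; ring.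
by rewrite sumR_perm_eval; case: (u_unit_sum i) => _ [_ ->]; ring.
Qed.

Lemma opt_welfare_ge1 : 1 <= opt_welfare u.
Proof.
have := card_perm_gt0; have: INR perms <= INR perms * opt_welfare u.
  rewrite -{1}sum_welfare_perm -sumR_const_card.
  by apply: sumR_le => mu _; apply: welfare_le_opt.
nra.
Qed.

Lemma opt_welfare_attained : exists mu : {perm 'I_n}, opt_welfare u = welfare u mu.
Proof. by case: (opt_welfare_cases u) => // opt0; have := opt_welfare_ge1; lra. Qed.

Lemma RP_expected_welfare_ge1 : 1 <= RP_expected_welfare u.
Proof.
have := card_perm_gt0; have := sum_welfare_sd_ge_card u_unit_sum n_gt0.
rewrite /RP_expected_welfare => sum_ge P_gt0.
by apply: (Rmult_le_reg_r (INR perms)) => //; field_simplify; lra.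
Qed.

Lemma RP_expected_welfare_ge_sq (mu : {perm 'I_n}) :
  welfare u mu * welfare u mu <= 8 * INR n * RP_expected_welfare u.
Proof.
set W := welfare u mu.
have W_ge0 : 0 <= W := welfare_ge0 mu.
have W_le_n : W <= INR n := welfare_le_n mu.
have [K [K_gt K_le]] := exists_nat_ceil (r := W / 4) ltac:(lra).
have K_le_n : (K <= n)%nat.
  have n_pos : 0 < INR n by apply/lt_0_INR/ltP.
  have: INR K < INR n.+1 by rewrite S_INR; lra.
  by move/INR_lt/ltP.
have K_W : 4 * (INR K - 1) <= W by lra.
have := sum_welfare_sd_ge_prefix u_unit_sum K_le_n K_W.
have := card_perm_gt0; rewrite /RP_expected_welfare -/W.
set S := \big[Rplus/0]_(s : {perm 'I_n}) _ => P_gt0 prefix_le.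
have: W / 4 * (INR perms * (W / 2)) <= INR K * (INR perms * (W / 2)).
  by apply: Rmult_le_compat_r; [nra | lra].
move=> ?; apply: (Rmult_le_reg_r (INR perms)) => //.
have ->: 8 * INR n * (S / INR perms) * INR perms = 8 * (INR n * S) by field; lra.
lra.
Qed.

End RandomPriority.

Theorem lemma7 :
  exists c : R, 0 < c /\
    forall (n : nat), leq 1 n ->
    forall u : profile n, unit_sum u ->
      c / sqrt (INR n) <= RP_expected_welfare u / opt_welfare u.
Proof.
exists (1 / 8); split; first lra.
move=> n n_gt0 u u_unit_sum.
have [mu opt_mu] := opt_welfare_attained u_unit_sum n_gt0.
apply: inv_sqrt_le_ratio.
- exact/lt_0_INR/ltP.
- exact: opt_welfare_ge1.
- exact: RP_expected_welfare_ge1.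
- by rewrite opt_mu; apply: RP_expected_welfare_ge_sq.
Qed.
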